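(* For $N\ge1$, \[Z_N(\{u\}_N|\{w\}_N)=\frac{\prod_{j=1}^N(1-t)cu_j\prod_{j,k=1}^N(au_j+bw_k)(eu_j+fw_k)}{(cd)^{N(N-1)/2}\prod_{1\le j<k\le N}(u_j-u_k)(w_k-w_j)}\det_{1\le j,k\le N}\Big(\frac{1}{(au_j+bw_k)(eu_j+fw_k)}\Big)\] as rational functions of $u_1,\dots,u_N,w_1,\dots,w_N$.
   Context: Fix complex parameters $t,a,b,c,d,e,f$, all nonzero, with $t\neq1$, satisfying $cd+af=0$ and $tcd+be=0$. The inhomogeneous $L$-operator $L_{aj}(u,w)$ on $W_a\otimes V_j$ ($\cong\mathbb{C}^2\otimes\mathbb{C}^2$, basis $|0\rangle,|1\rangle$) has matrix elements ${}_a\langle\gamma|{}_j\langle\delta|L_{aj}(u,w)|\alpha\rangle_a|\beta\rangle_j=[L(u,w)]^{\gamma\delta}_{\alpha\beta}$: $[L]^{00}_{00}=au+bw$, $[L]^{01}_{01}=atu+bw$, $[L]^{01}_{10}=(1-t)cu$, $[L]^{10}_{01}=(1-t)dw$, $[L]^{10}_{10}=eu+fw$, $[L]^{11}_{11}=eu+tfw$, all others $0$. Define $B_N(u|\{w\}_N)={}_a\langle0|L_{aN}(u,w_N)\cdots L_{a1}(u,w_1)|1\rangle_a$ on $V_1\otimes\cdots\otimes V_N$ and $Z_N(\{u\}_N|\{w\}_N)=\langle1\cdots N|B_N(u_1|\{w\}_N)\cdots B_N(u_N|\{w\}_N)|\Omega\rangle$ with $|\Omega\rangle=|0\rangle^{\otimes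 N}$, $\langle1\cdots N|=\langle1|^{\otimes N}$. *)

From HB Require Import structures.
From mathcomp Require Import all_boot all_order all_algebra.
Set Implicit Arguments. Unset Strict Implicit. Unset Printing Implicit Defensive.
Import Order.TTheory GRing.Theory Num.Theory.
Local Open Scope ring_scope.

Section Model.
Variable R : numClosedFieldType.
Variables t a b c d e f : R.

(* Lent u w g dl al be = [L(u,w)]^{g dl}_{al be}
   (g = outgoing auxiliary, dl = outgoing quantum,
    al = incoming auxiliary, be = incoming quantum; false = |0>, true = |1>) *)
Definition Lent (u w : R) (g dl al be : bool) : R :=
  match g, dl, al, be with
  | false, false, false, false => a * u + b * w
  | false, true,  false, true  => a * t * u + b * w
  | false, true,  true,  false => (1 - t) * c * u
  | true,  false, false, true  => (1 - t) * d * w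
  | true,  false, true,  false => e * u + f * w
  | true,  true,  true,  true  => e * u + t * f * w
  | _, _, _, _ => 0
  end.

Variable N : nat.

Definition config := {ffun 'I_N -> bool}.

(* Matrix element <out| B_N(u|{w}) |inn> on V_1 (x) ... (x) V_N, where
   B_N(u) = _a<0| L_{aN}(u,w_N) ... L_{a1}(u,w_1) |1>_a.
   The auxiliary path alpha : 'I_N.+1 -> bool has alpha_0 = 1 (input),
   alpha_N = 0 (output); site j maps aux alpha_j to alpha_{j+1}. *)
Definition Bel (u : R) (w : 'I_N -> R) (out inn : config) : R :=
  \sum_(al : {ffun 'I_N.+1 -> bool} | (al ord0 == true) && (al ord_max == false))
    \prod_(j < N) Lent u (w j) (al (lift ord0 j)) (out j)
                          (al (widen_ord (leqnSn N) j)) (inn j).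

Definition applyB (u : R) (w : 'I_N -> R) (psi : config -> R) : config -> R :=
  fun out => \sum_(inn : config) Bel u w out inn * psi inn.

Definition Omega : config -> R :=
  fun s => if s == [ffun => false] then 1 else 0.

(* Z_N = <1...1| B(u_1) B(u_2) ... B(u_N) |Omega>  (B(u_N) acts first) *)
Definition ZN (u w : 'I_N -> R) : R :=
  foldr (fun i psi => applyB (u i) w psi) Omega (enum 'I_N) [ffun => true].

End Model.

(* Izergin-Korepin argument.  The L-operator satisfies an RLL relation with a six-vertex
   R-matrix (this is where [c d + a f = 0] and [t c d + b e = 0] enter), so the operators
   B(u) commute and Z_N is symmetric in the u_j.  With phi(x, y) = (a x + b y)(e x + f y),
   both sides of
     (-cd)^(N(N-1)/2) Vdm(u) Vdm(w) Z_N = prod_j (1-t) c u_j * det [prod_(l != k) phi(u_j, w_l)]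
   are polynomials of degree at most 2N-2 in w_N.  They agree at the N-1 points w_N = w_j,
   where both vanish, and at the N points w_N = -a u_i / b: moving u_i to the last place by
   symmetry, the last column of the lattice freezes and both sides factor through the same
   identity for N-1.  Dividing by the nonzero Vandermonde and phi factors gives the formula. *)

From Pilot Require Import Defs.
From HB Require Import structures.
From mathcomp Require Import all_boot all_order all_algebra all_fingroup.
From mathcomp Require Import ring zify.
From Stdlib Require Import FunctionalExtensionality.
Set Implicit Arguments. Unset Strict Implicit. Unset Printing Implicit Defensive.
Import Order.TTheory GRing.Theory Num.Theory.
Local Open Scope ring_scope.

Section Paths.
Variable S : finType.

Definition ffrcons n (q : {ffun 'I_n -> S}) (s : S) : {ffun 'I_n.+1 -> S} :=
  [ffun i => if unlift ord_max i is Some j then q j else s].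
Definition ffbelast n (p : {ffun 'I_n.+1 -> S}) : {ffun 'I_n -> S} :=
  [ffun j => p (widen_ord (leqnSn n) j)].

Lemma widen_ord_lift_max n (j : 'I_n) : widen_ord (leqnSn n) j = lift ord_max j.
Proof. by apply: val_inj; rewrite /= /bump leqNgt ltn_ord. Qed.

Lemma ffrcons_widen n q (s : S) (j : 'I_n) : ffrcons q s (widen_ord (leqnSn n) j) = q j.
Proof. by rewrite ffunE widen_ord_lift_max liftK. Qed.

Lemma ffrcons_max n q (s : S) : ffrcons q s (@ord_max n) = s.
Proof. by rewrite ffunE unlift_none. Qed.

Lemma ffbelastK n q (s : S) : ffbelast (@ffrcons n q s) = q.
Proof. by apply/ffunP=> j; rewrite ffunE ffrcons_widen. Qed.

Lemma ffrcons_belast n (p : {ffun 'I_n.+1 -> S}) : ffrcons (ffbelast p) (p ord_max) = p.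
Proof.
apply/ffunP=> i; rewrite ffunE; case: unliftP => [j ->|->] //.
by rewrite ffunE widen_ord_lift_max.
Qed.

Lemma sum_ffunSr (R : nmodType) n (F : {ffun 'I_n.+1 -> S} -> R) :
  \sum_p F p = \sum_(q : {ffun 'I_n -> S}) \sum_(s : S) F (ffrcons q s).
Proof.
rewrite pair_big /= (reindex (fun x : {ffun 'I_n -> S} * S => ffrcons x.1 x.2)) //=.
exists (fun p => (ffbelast p, p ord_max)) => [[q s] _|p _] /=.
  by rewrite ffbelastK ffrcons_max.
by rewrite ffrcons_belast.
Qed.

Lemma ffrcons_ord0 n (q : {ffun 'I_n.+1 -> S}) s : ffrcons q s ord0 = q ord0.
Proof. by rewrite -(ffrcons_widen q s ord0); congr (ffrcons q s _); apply: val_inj. Qed.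

Lemma ffrcons_lift0 n (q : {ffun 'I_n.+1 -> S}) s (j : 'I_n) :
  ffrcons q s (lift ord0 (widen_ord (leqnSn n) j)) = q (lift ord0 j).
Proof. by rewrite -(ffrcons_widen q s); congr (ffrcons q s _); apply: val_inj. Qed.

Lemma ffrcons_lift0_max n (q : {ffun 'I_n.+1 -> S}) s : ffrcons q s (lift ord0 ord_max) = s.
Proof. by rewrite -[RHS](ffrcons_max q s); congr (ffrcons q s _); apply: val_inj. Qed.

End Paths.

Section Chains.
Variables (R : comNzRingType) (S : finType).
Local Notation wid := (widen_ord (leqnSn _)).

(* chain M v s' is the entry s' of the row vector v (M 0) (M 1) ... (M (n-1)). *)
Fixpoint chain n : ('I_n -> S -> S -> R) -> (S -> R) -> S -> R :=
  match n with
  | 0 => fun _ v => v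
  | m.+1 => fun M v s' => \sum_s chain (fun j => M (wid j)) v s * M ord_max s s'
  end.

Lemma eq_chain n (M M' : 'I_n -> S -> S -> R) v v' :
  (forall j x y, M j x y = M' j x y) -> v =1 v' -> chain M v =1 chain M' v'.
Proof.
elim: n M M' => [|n IH] M M' eqM eqv s //=.
by apply: eq_bigr => x _; rewrite eqM (IH _ (fun j => M' (wid j))).
Qed.

Lemma chainZ n (M : 'I_n -> S -> S -> R) k v s :
  chain M (fun x => k * v x) s = k * chain M v s.
Proof.
elim: n M s => [|n IH] M s //=.
by rewrite mulr_sumr; apply: eq_bigr => x _; rewrite IH mulrA.
Qed.

Lemma sum_paths_chain n (M : 'I_n -> S -> S -> R) (v g : S -> R) :
  \sum_(p : {ffun 'I_n.+1 -> S})
     v (p ord0) * (\prod_(j < n) M j (p (wid j)) (p (lift ord0 j))) * g (p ord_max)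
  = \sum_s chain M v s * g s.
Proof.
elim: n M g => [|n IH] M g.
  have -> : ord0 = ord_max :> 'I_1 by apply: val_inj.
  rewrite sum_ffunSr; under eq_bigr => q _ do under eq_bigr => s _ do
    rewrite big_ord0 mulr1 ffrcons_max.
  by rewrite big_const card_ffun !card_ord /= addr0.
rewrite sum_ffunSr.
transitivity (\sum_(q : {ffun 'I_n.+1 -> S}) v (q ord0) *
  (\prod_(j < n) M (wid j) (q (wid j)) (q (lift ord0 j))) * \sum_s M ord_max (q ord_max) s * g s).
  apply: eq_bigr => q _; rewrite mulr_sumr; apply: eq_bigr => s _.
  rewrite ffrcons_ord0 big_ord_recr /= ffrcons_widen ffrcons_lift0_max ffrcons_max.
  under eq_bigr do rewrite ffrcons_widen ffrcons_lift0.
  by rewrite !mulrA.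
rewrite (IH (fun j => M (wid j)) (fun x => \sum_s M ord_max x s * g s)) /=.
under [RHS]eq_bigr do rewrite mulr_suml.
rewrite [RHS]exchange_big; apply: eq_bigr => x _; rewrite mulr_sumr.
by apply: eq_bigr => s _; rewrite mulrA.
Qed.

Lemma chain_intertwine n (M M' : 'I_n -> S -> S -> R) (T : S -> S -> R) :
  (forall j s s', \sum_g T s g * M j g s' = \sum_g M' j s g * T g s') ->
  forall v s', chain M (fun s => \sum_g v g * T g s) s' = \sum_s chain M' v s * T s s'.
Proof.
elim: n M M' => [|n IH] M M' TM v s' //=.
set P := chain (fun j => M' (wid j)) v.
transitivity (\sum_x (\sum_s P s * T s x) * M ord_max x s').
  by apply: eq_bigr => x _; rewrite (IH _ (fun j => M' (wid j))) // => j; apply: TM.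
transitivity (\sum_s P s * \sum_g M' ord_max s g * T g s').
  under eq_bigr do rewrite mulr_suml.
  rewrite exchange_big; apply: eq_bigr => s _ /=.
  by rewrite -TM mulr_sumr; apply: eq_bigr => x _; rewrite mulrA.
under [RHS]eq_bigr do rewrite mulr_suml.
rewrite [RHS]exchange_big; apply: eq_bigr => s _ /=.
by rewrite mulr_sumr; apply: eq_bigr => g _; rewrite mulrA.
Qed.

End Chains.

Lemma sum_chain_mul (R : comNzRingType) (S T : finType) n (Lu Lv : 'I_n -> T -> S -> S -> R)
    v1 v2 s1 s2 :
  \sum_(mid : {ffun 'I_n -> T})
     chain (fun j => Lu j (mid j)) v1 s1 * chain (fun j => Lv j (mid j)) v2 s2
  = chain (fun j (x y : S * S) => \sum_m Lu j m x.1 y.1 * Lv j m x.2 y.2)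
          (fun x => v1 x.1 * v2 x.2) (s1, s2).
Proof.
elim: n Lu Lv s1 s2 => [|n IH] Lu Lv s1 s2.
  by rewrite /= big_const card_ffun !card_ord /= addr0.
set Lu' := fun j => Lu (widen_ord (leqnSn n) j).
set Lv' := fun j => Lv (widen_ord (leqnSn n) j).
pose A (q : {ffun 'I_n -> T}) (x : S) := chain (fun j => Lu' j (q j)) v1 x.
pose B (q : {ffun 'I_n -> T}) (y : S) := chain (fun j => Lv' j (q j)) v2 y.
rewrite sum_ffunSr /=.
transitivity (\sum_(q : {ffun 'I_n -> T}) \sum_x \sum_y A q x * B q y *
                 \sum_m Lu ord_max m x s1 * Lv ord_max m y s2).
  apply: eq_bigr => q _.
  transitivity (\sum_m (\sum_x A q x * Lu ord_max m x s1) * \sum_y B q y * Lv ord_max m y s2).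
    apply: eq_bigr => m _; rewrite ffrcons_max.
    by congr (_ * _); apply: eq_bigr => x _; congr (_ * _);
      apply: eq_chain => // j x0 y0; rewrite ffrcons_widen.
  under eq_bigr do rewrite big_distrlr /=.
  rewrite exchange_big; apply: eq_bigr => x _ /=; rewrite exchange_big.
  apply: eq_bigr => y _ /=; rewrite mulr_sumr; apply: eq_bigr => m _; ring.
rewrite exchange_big /=; under eq_bigr do rewrite exchange_big /=.
rewrite pair_big; apply: eq_bigr => [[x y]] _ /=.
by rewrite -mulr_suml (IH Lu' Lv').
Qed.

Section PolynomialFunctions.
Variable R : idomainType.

Definition polyfun n (F : R -> R) := exists2 p : {poly R}, (size p <= n)%N & F =1 horner p.

Lemma eq_polyfun n F G : polyfun n F -> F =1 G -> polyfun n G.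
Proof. by move=> [p sp Fp] FG; exists p => // x; rewrite -FG. Qed.

Lemma polyfun_leq n m F : (n <= m)%N -> polyfun n F -> polyfun m F.
Proof. by move=> le_nm [p sp Fp]; exists p => //; apply: leq_trans le_nm. Qed.

Lemma polyfun0 n : polyfun n (fun _ => 0).
Proof. by exists 0; rewrite ?size_poly0 // => x; rewrite horner0. Qed.

Lemma polyfunC k : polyfun 1 (fun _ => k).
Proof. by exists k%:P; [exact: size_polyC_leq1 | move=> x; rewrite hornerC]. Qed.

Lemma polyfun_lin al be : polyfun 2 (fun x => al * x + be).
Proof.
exists (al *: 'X + be%:P); last by move=> x; rewrite hornerD hornerZ hornerX hornerC.
apply: leq_trans (size_polyD _ _) _; rewrite geq_max (leq_trans (size_polyC_leq1 be)) // andbT.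
by apply: leq_trans (size_scale_leq _ _) _; rewrite size_polyX.
Qed.

Lemma polyfunD n F G : polyfun n F -> polyfun n G -> polyfun n (fun x => F x + G x).
Proof.
move=> [p sp Fp] [q sq Gq]; exists (p + q); last by move=> x; rewrite hornerD Fp Gq.
by apply: leq_trans (size_polyD _ _) _; rewrite geq_max sp sq.
Qed.

Lemma polyfunN n F : polyfun n F -> polyfun n (fun x => - F x).
Proof. by move=> [p sp Fp]; exists (- p); rewrite ?size_polyN // => x; rewrite hornerN Fp. Qed.

Lemma polyfunM n m F G : polyfun n F -> polyfun m G -> polyfun (n + m).-1 (fun x => F x * G x).
Proof.
move=> [p sp Fp] [q sq Gq]; exists (p * q); last by move=> x; rewrite hornerM Fp Gq.
by apply: leq_trans (size_polyMleq _ _) _; rewrite -!subn1 leq_sub2r // leq_add.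
Qed.

Lemma polyfunMl n k F : polyfun n F -> polyfun n (fun x => k * F x).
Proof. by move=> /(polyfunM (polyfunC k)); rewrite add1n. Qed.

Lemma polyfunMr n k F : polyfun n F -> polyfun n (fun x => F x * k).
Proof. by move=> /polyfunM /(_ (polyfunC k)); rewrite addn1. Qed.

Lemma polyfun_sum (I : finType) (P : pred I) (F : I -> R -> R) n :
  (forall i, P i -> polyfun n (F i)) -> polyfun n (fun x => \sum_(i | P i) F i x).
Proof.
move=> PF; elim: (index_enum I) => [|i r IH].
  by apply: eq_polyfun (polyfun0 n) _ => x; rewrite big_nil.
case Pi: (P i).
  by apply: eq_polyfun (polyfunD (PF i Pi) IH) _ => x; rewrite big_cons Pi.
by apply: eq_polyfun IH _ => x; rewrite big_cons Pi.
Qed.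

Lemma polyfun_prod k n (F : 'I_n -> R -> R) :
  (forall i, polyfun k.+1 (F i)) -> polyfun (k * n).+1 (fun x => \prod_(i < n) F i x).
Proof.
elim: n F => [|n IH] F PF.
  by rewrite muln0; apply: eq_polyfun (polyfunC 1) _ => x; rewrite big_ord0.
apply: (@polyfun_leq ((k * n).+1 + k.+1).-1); first by rewrite mulnS; lia.
apply: eq_polyfun (polyfunM (IH _ (fun i => PF _)) (PF ord_max)) _ => x.
by rewrite big_ord_recr.
Qed.

Lemma polyfun_det m k (A : R -> 'M[R]_m) :
  (forall i j, polyfun k.+1 (fun x => A x i j)) -> polyfun (k * m).+1 (fun x => \det (A x)).
Proof.
move=> PA; apply: polyfun_sum => s _; apply: polyfunMl.
exact: polyfun_prod (fun i => PA i (s i)).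
Qed.

Lemma polyfun_eq0 n F (s : seq R) :
  polyfun n F -> uniq s -> (n <= size s)%N -> {in s, F =1 fun _ => 0} -> F =1 fun _ => 0.
Proof.
move=> [p sp Fp] us ls F0 x; rewrite Fp; suff -> : p = 0 by rewrite horner0.
apply: contraTeq ls => p0; rewrite -ltnNge (leq_trans _ sp) //.
by apply: max_poly_roots p0 _ us; apply/allP => y ys; rewrite /root -Fp F0.
Qed.

End PolynomialFunctions.

Lemma sum_bool2 (R : nmodType) (F : bool * bool -> R) :
  \sum_g F g = F (true, true) + F (true, false) + F (false, true) + F (false, false).
Proof.
transitivity (\sum_(i : bool) \sum_(j : bool) F (i, j)).
  by rewrite pair_big; apply: eq_bigr => -[].
by rewrite !big_bool /= addrA.
Qed.

Definition ket1 (R : nzSemiRingType) (s : bool) : R := s%:R.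

Section Model.
Variable R : numClosedFieldType.
Variables t a b c d e f : R.

Local Notation Lent := (Lent t a b c d e f).
Local Notation Bel := (Bel t a b c d e f).

Definition Bmx N u (w : 'I_N -> R) (out inn : config N) : 'I_N -> bool -> bool -> R :=
  fun j x y => Lent u (w j) y (out j) x (inn j).

Lemma Bel_chain N u (w : 'I_N -> R) out inn :
  Bel u w out inn = chain (Bmx u w out inn) (ket1 R) false.
Proof.
have := sum_paths_chain (Bmx u w out inn) (ket1 R) (fun s => (~~ s)%:R).
rewrite big_bool /= mulr0 add0r mulr1 => <-.
rewrite /Defs.Bel big_mkcond; apply: eq_bigr => al _ /=.
by case: (al ord0); case: (al ord_max); rewrite /= ?mul1r ?mulr1 ?mul0r ?mulr0.
Qed.

Definition BBmx u v wj (o i : bool) (x y : bool * bool) : R :=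
  \sum_m Lent u wj y.1 o x.1 m * Lent v wj y.2 m x.2 i.

Lemma sum_Bel_mul N u v (w : 'I_N -> R) out inn :
  \sum_mid Bel u w out mid * Bel v w mid inn
  = chain (fun j => BBmx u v (w j) (out j) (inn j))
          (fun x => ket1 R x.1 * ket1 R x.2) (false, false).
Proof.
under eq_bigr do rewrite !Bel_chain.
exact: (sum_chain_mul (fun j m x y => Lent u (w j) y (out j) x m)
                      (fun j m x y => Lent v (w j) y m x (inn j))).
Qed.

Definition Rmx (u v : R) (x y : bool * bool) : R :=
  match x, y with
  | (false, false), (false, false) | (true, true), (true, true) => t * u - v
  | (false, true), (false, true) => - ((1 - t) * u)
  | (false, true), (true, false) => t * (u - v)
  | (true, false), (false, true) => u - v
  | (true, false), (true, false) => - ((1 - t) * v)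
  | _, _ => 0
  end.

Hypothesis b_neq0 : b != 0.
Hypothesis c_neq0 : c != 0.
Hypothesis cd_af : c * d + a * f = 0.
Hypothesis cd_be : t * c * d + b * e = 0.

Lemma dE : d = - (a * f) / c.
Proof.
by apply: (mulfI c_neq0); rewrite mulrCA divff // mulr1; apply/eqP; rewrite -addr_eq0 cd_af.
Qed.

Lemma eE : e = t * a * f / b.
Proof.
apply: (mulfI b_neq0); rewrite mulrCA divff // mulr1.
have cdE : c * d = - (a * f) by apply/eqP; rewrite -addr_eq0 cd_af.
have beE : b * e = - (t * (c * d)) by apply/eqP; rewrite -addr_eq0 addrC mulrA cd_be.
by rewrite beE cdE mulrN opprK mulrA.
Qed.

Lemma RLL u v wj o i s s' :
  \sum_g Rmx u v s g * BBmx u v wj o i g s' = \sum_g BBmx v u wj o i s g * Rmx u v g s'.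
Proof.
rewrite !sum_bool2 /BBmx dE eE.
by case: o; case: i; case: s => [[] []]; case: s' => [[] []];
  rewrite /= ?big_bool /=; field; rewrite ?b_neq0 ?c_neq0.
Qed.

End Model.

Section Commutation.
Variable R : numClosedFieldType.
Variables t a b c d e f : R.
Hypothesis b_neq0 : b != 0.
Hypothesis c_neq0 : c != 0.
Hypothesis cd_af : c * d + a * f = 0.
Hypothesis cd_be : t * c * d + b * e = 0.

Local Notation Lent := (Lent t a b c d e f).
Local Notation Bel := (Bel t a b c d e f).
Local Notation applyB := (applyB t a b c d e f).

Lemma Lent_affine_u u w g dl al be :
  Lent u w g dl al be = (Lent 1 w g dl al be - Lent 0 w g dl al be) * u + Lent 0 w g dl al be.
Proof. by case: g; case: dl; case: al; case: be => /=; ring. Qed.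

Lemma Bel_polyfun_u N (w : 'I_N -> R) out inn : polyfun N.+1 (fun x => Bel x w out inn).
Proof.
apply: polyfun_sum => al _; apply: (@polyfun_leq _ (1 * N).+1); first by rewrite mul1n.
apply: polyfun_prod => j.
by apply: eq_polyfun (polyfun_lin _ _) _ => x; rewrite [RHS]Lent_affine_u.
Qed.

Lemma applyB_polyfun_u N (w : 'I_N -> R) psi out : polyfun N.+1 (fun x => applyB x w psi out).
Proof. by apply: polyfun_sum => inn _; apply: polyfunMr; apply: Bel_polyfun_u. Qed.

Lemma applyB_applyB N u v (w : 'I_N -> R) psi out :
  applyB u w (applyB v w psi) out
  = \sum_inn (\sum_mid Bel u w out mid * Bel v w mid inn) * psi inn.
Proof.
rewrite /Defs.applyB; under eq_bigr do rewrite mulr_sumr.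
rewrite exchange_big /=; apply: eq_bigr => inn _; rewrite mulr_suml.
by apply: eq_bigr => mid _; rewrite mulrA.
Qed.

(* Both sides of the intertwined chain pick up the diagonal entry [t u - v] of [Rmx u v],
   which must be cancelled; the case [t u = v] is recovered in [applyB_comm] by
   polynomiality in [v]. *)
Lemma sum_Bel_mul_comm u v (tu_v : t * u - v != 0) N (w : 'I_N -> R) out inn :
  \sum_mid Bel u w out mid * Bel v w mid inn = \sum_mid Bel v w out mid * Bel u w mid inn.
Proof.
rewrite !sum_Bel_mul.
set v0 := fun x : bool * bool => ket1 R x.1 * ket1 R x.2.
have v0R s : \sum_g v0 g * Rmx t u v g s = (t * u - v) * v0 s.
  by rewrite sum_bool2 /v0 /ket1; case: s => [[] []] /=; ring.
have := chain_intertwine (fun j => RLL b_neq0 c_neq0 cd_af cd_be u v (w j) (out j) (inn j)) v0.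
move=> /(_ (false, false)).
rewrite (eq_chain (M' := fun j => BBmx t a b c d e f u v (w j) (out j) (inn j)) _ v0R) //.
rewrite chainZ sum_bool2 /= !mulr0 !addr0 add0r => eq_uv.
by apply: (mulfI tu_v); rewrite eq_uv mulrC.
Qed.

Lemma applyB_comm N u v (w : 'I_N -> R) psi :
  applyB u w (applyB v w psi) =1 applyB v w (applyB u w psi).
Proof.
move=> out; apply/eqP; rewrite -subr_eq0; apply/eqP.
pose G x := applyB u w (applyB x w psi) out - applyB x w (applyB u w psi) out.
have polyG : polyfun N.+1 G.
  apply: polyfunD; last by apply: polyfunN; apply: applyB_polyfun_u.
  rewrite /Defs.applyB; apply: polyfun_sum => inn _; apply: polyfunMl.
  exact: applyB_polyfun_u.
apply: (polyfun_eq0 polyG (s := [seq t * u + k.+1%:R | k <- iota 0 N.+1])) => //.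
- rewrite map_inj_uniq ?iota_uniq // => i j /addrI /eqP.
  by rewrite eqr_nat eqSS => /eqP.
- by rewrite size_map size_iota.
move=> x /mapP [k _ ->]; apply/eqP; rewrite /G subr_eq0; apply/eqP.
rewrite !applyB_applyB; apply: eq_bigr => inn _; congr (_ * _).
by apply: sum_Bel_mul_comm; rewrite opprD addrA subrr sub0r oppr_eq0 pnatr_eq0.
Qed.

End Commutation.

Section CommutingFold.
Variables (I : eqType) (T : Type) (F : I -> T -> T).
Hypothesis F_comm : forall i j x, F i (F j x) = F j (F i x).

Lemma foldr_rem x0 l i : i \in l -> foldr F x0 l = F i (foldr F x0 (rem i l)).
Proof.
elim: l => [|j l IH] //= /[1!in_cons]; case: eqP => [-> _|ne_ij /= il].
  by rewrite eqxx.
have -> : (j == i) = false by apply/eqP => /esym.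
by rewrite /= IH // F_comm.
Qed.

Lemma foldr_perm x0 l1 l2 : perm_eq l1 l2 -> foldr F x0 l1 = foldr F x0 l2.
Proof.
elim: l1 l2 => [|i l1 IH] l2 pe.
  by move: pe; rewrite perm_sym => /perm_nilP ->.
have il2 : i \in l2 by rewrite -(perm_mem pe) mem_head.
rewrite (foldr_rem x0 il2) /= (IH (rem i l2)) //.
by rewrite -(perm_cons i) (perm_trans pe) // perm_to_rem.
Qed.

End CommutingFold.

Lemma ZN_perm (R : numClosedFieldType) (t a b c d e f : R) (b_neq0 : b != 0) (c_neq0 : c != 0)
    (cd_af : c * d + a * f = 0) (cd_be : t * c * d + b * e = 0)
    N (u w : 'I_N -> R) (s : 'S_N) :
  ZN t a b c d e f (fun i => u (s i)) w = ZN t a b c d e f u w.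
Proof.
rewrite /ZN -(foldr_map s (fun i psi => applyB t a b c d e f (u i) w psi)).
congr (_ _); apply: foldr_perm.
  by move=> i j psi; apply: functional_extensionality; apply: applyB_comm.
apply: uniq_perm; [by rewrite map_inj_uniq ?enum_uniq //; apply: perm_inj | exact: enum_uniq |].
move=> i; rewrite mem_enum; apply/mapP; exists (s^-1 i)%g; first by rewrite mem_enum.
by rewrite permKV.
Qed.

Section LastEntry.
Variables (T : Type) (n : nat).
Local Notation wid := (widen_ord (leqnSn n)).

Definition setlast (w : 'I_n.+1 -> T) (X : T) : 'I_n.+1 -> T :=
  fun j => if j == ord_max then X else w j.

Lemma setlast_widen w X j : setlast w X (wid j) = w (wid j).
Proof. by rewrite /setlast widen_ord_lift_max eq_sym (negbTE (neq_lift _ _)). Qed.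

Lemma setlast_max w X : setlast w X ord_max = X.
Proof. by rewrite /setlast eqxx. Qed.

Lemma setlast_id w : setlast w (w ord_max) = w.
Proof. by apply: functional_extensionality => j; rewrite /setlast; case: eqP => // ->. Qed.

End LastEntry.

Lemma chain_ket1_true (R : comNzRingType) n (M : 'I_n -> bool -> bool -> R) :
  (forall j, M j false true = 0) -> chain M (ket1 R) true = \prod_j M j true true.
Proof.
elim: n M => [|n IH] M M0; first by rewrite big_ord0.
by rewrite /= big_bool /= M0 mulr0 addr0 (IH _ (fun j => M0 _)) big_ord_recr.
Qed.

Section LastColumn.
Variable R : numClosedFieldType.
Variables t a b c d e f : R.

Local Notation Lent := (Lent t a b c d e f).
Local Notation Bel := (Bel t a b c d e f).
Local Notation applyB := (applyB t a b c d e f).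
Local Notation ZN := (ZN t a b c d e f).

Definition applyBs (I : Type) N (u : I -> R) (w : 'I_N -> R) (l : seq I)
    (psi : config N -> R) :=
  foldr (fun i => applyB (u i) w) psi l.

Lemma ZN_applyBs N (u w : 'I_N -> R) :
  ZN u w = applyBs u w (enum 'I_N) (Omega R (N:=N)) [ffun => true].
Proof. by []. Qed.

Lemma applyBZ N v (w : 'I_N -> R) k psi cc :
  applyB v w (fun q => k * psi q) cc = k * applyB v w psi cc.
Proof. by rewrite /Defs.applyB mulr_sumr; apply: eq_bigr => q _; rewrite mulrCA. Qed.

Lemma applyBsZ (I : Type) N (u : I -> R) (w : 'I_N -> R) l k phi cc :
  applyBs u w l (fun q => k * phi q) cc = k * applyBs u w l phi cc.
Proof.
elim: l cc => [|i l IH] cc //=.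
by rewrite -applyBZ; apply: eq_bigr => q _; rewrite IH.
Qed.

Variable n : nat.
Local Notation wid := (widen_ord (leqnSn n)).

Lemma Bel_splitr u (w : 'I_n.+1 -> R) (out inn : config n.+1) :
  Bel u w out inn =
    \sum_s chain (Bmx t a b c d e f u (fun j => w (wid j)) (ffbelast out) (ffbelast inn)) (ket1 R) s
            * Lent u (w ord_max) false (out ord_max) s (inn ord_max).
Proof.
rewrite Bel_chain /=; apply: eq_bigr => s _; congr (_ * _).
by apply: eq_chain => // j x y; rewrite /Bmx !ffunE.
Qed.

Lemma Lent_affine_w u w g dl al be :
  Lent u w g dl al be = (Lent u 1 g dl al be - Lent u 0 g dl al be) * w + Lent u 0 g dl al be.
Proof. by case: g; case: dl; case: al; case: be => /=; ring. Qed.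

Lemma Lent_flip_const_w u w dl al be :
  dl != be -> Lent u w false dl al be = Lent u 0 false dl al be.
Proof. by case: dl; case: al; case: be. Qed.

Lemma Bel_polyfun_last u (w : 'I_n.+1 -> R) (out inn : config n.+1) :
  polyfun (if out ord_max == inn ord_max then 2 else 1) (fun X => Bel u (setlast w X) out inn).
Proof.
pose B' := Bmx t a b c d e f u (fun j => w (wid j)) (ffbelast out) (ffbelast inn).
apply: (@eq_polyfun _ _ (fun X =>
  \sum_s chain B' (ket1 R) s * Lent u X false (out ord_max) s (inn ord_max))).
  apply: polyfun_sum => s _; apply: polyfunMl; case: eqP => [_|/eqP ne].
    by apply: eq_polyfun (polyfun_lin _ _) _ => X; rewrite [RHS]Lent_affine_w.
  by apply: eq_polyfun (polyfunC _) _ => X; rewrite Lent_flip_const_w.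
move=> X; rewrite Bel_splitr setlast_max; apply: eq_bigr => s _; congr (_ * _).
by apply: eq_chain => // j x y; rewrite /Bmx setlast_widen.
Qed.

(* The last quantum site starts in state 0 (in [Omega]) and must end in state 1, and a
   [B] operator is affine in [w_N] only when it leaves that site unchanged: the flip saves
   one degree. *)
Lemma applyBs_polyfun_last (u : 'I_n.+1 -> R) w (l : seq 'I_n.+1) (cc : config n.+1) :
  polyfun (if cc ord_max then size l else (size l).+1)
          (fun X => applyBs u (setlast w X) l (Omega R (N:=n.+1)) cc).
Proof.
elim: l cc => [|i l IH] cc /=.
  case: ifP => [ccN|_]; last exact: polyfunC.
  apply: eq_polyfun (polyfun0 _ 0) _ => X; rewrite /Omega; case: eqP => // cc0.
  by move: ccN; rewrite cc0 ffunE.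
apply: polyfun_sum => inn _.
have polyB := Bel_polyfun_last (u i) w cc inn.
have polyP := IH inn.
case: (cc ord_max) polyB; case: (inn ord_max) polyP => /= polyP polyB.
- by have := polyfunM polyB polyP; rewrite add2n.
- by have := polyfunM polyB polyP; rewrite add1n.
- by apply: polyfun_leq (polyfunM polyB polyP); rewrite add1n leqW.
- by have := polyfunM polyB polyP; rewrite add2n.
Qed.

Lemma ZN_polyfun_last (u w : 'I_n.+1 -> R) : polyfun n.+1 (fun X => ZN u (setlast w X)).
Proof.
have := applyBs_polyfun_last u w (enum 'I_n.+1) [ffun => true].
by rewrite ffunE size_enum_ord.
Qed.

Lemma applyB_last1 v (w : 'I_n.+1 -> R) (psi : config n.+1 -> R) (phi : config n -> R) :
  (forall q, psi q = if q ord_max then phi (ffbelast q) else 0) ->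
  forall cc, applyB v w psi cc =
    if cc ord_max
    then (a * t * v + b * w ord_max) * applyB v (fun j => w (wid j)) phi (ffbelast cc) else 0.
Proof.
move=> psiE cc; rewrite /Defs.applyB sum_ffunSr.
transitivity (\sum_q Bel v w cc (ffrcons q true) * phi q).
  apply: eq_bigr => q _; rewrite big_bool /= !psiE !ffrcons_max ffbelastK.
  by rewrite mulr0 addr0.
under eq_bigr do rewrite Bel_splitr ffrcons_max big_bool /=.
case: (cc ord_max) => /=; last by rewrite big1 // => q _; rewrite !mulr0 addr0 mul0r.
rewrite mulr_sumr; apply: eq_bigr => q _.
rewrite mulr0 add0r Bel_chain ffbelastK mulrA [_ * (a * t * v + _)]mulrC.
by congr (_ * _ * _); apply: eq_chain.
Qed.

Lemma applyBs_last1 (u : 'I_n -> R) (w : 'I_n.+1 -> R) (l : seq 'I_n)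
    (psi : config n.+1 -> R) (phi : config n -> R) :
  (forall q, psi q = if q ord_max then phi (ffbelast q) else 0) ->
  forall cc, applyBs u w l psi cc =
    if cc ord_max
    then (\prod_(i <- l) (a * t * u i + b * w ord_max)) *
           applyBs u (fun j => w (wid j)) l phi (ffbelast cc)
    else 0.
Proof.
move=> psiE; elim: l => [|i l IH] cc /=; first by rewrite big_nil mul1r psiE.
rewrite (applyB_last1 _ _ (phi := fun q => (\prod_(i <- l) (a * t * u i + b * w ord_max)) *
           applyBs u (fun j => w (wid j)) l phi q)) //.
by case: (cc ord_max) => //; rewrite applyBZ big_cons mulrA.
Qed.

Lemma prod_Omega (cc : config n) (F : 'I_n -> R) :
  \prod_j (if cc j then 0 else F j) = Omega R cc * \prod_j F j.
Proof.
rewrite /Omega; case: eqP => [->|ne].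
  by rewrite mul1r; apply: eq_bigr => j _; rewrite ffunE.
rewrite mul0r; case: (pickP (fun j => cc j)) => [j cj|cc0]; first by rewrite (bigD1 j) //= cj mul0r.
by case: ne; apply/ffunP => j; rewrite ffunE cc0.
Qed.

Lemma applyB_Omega_frozen v (w : 'I_n.+1 -> R) : a * v + b * w ord_max = 0 ->
  forall q, applyB v w (Omega R (N:=n.+1)) q =
    if q ord_max
    then (1 - t) * c * v * \prod_(j < n) (e * v + f * w (wid j)) * Omega R (ffbelast q)
    else 0.
Proof.
move=> frozen q; rewrite /Defs.applyB (bigD1 [ffun => false]) //= big1; last first.
  by move=> i /negbTE ni; rewrite /Omega ni mulr0.
rewrite /Omega eqxx mulr1 addr0 Bel_splitr big_bool /= ffunE.
have -> : ffbelast [ffun => false] = [ffun => false] :> config n.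
  by apply/ffunP => j; rewrite !ffunE.
rewrite chain_ket1_true; last by move=> j; rewrite /Bmx !ffunE; case: (q (wid j)).
case: (q ord_max) => /=; last by rewrite mulr0 frozen mulr0 addr0.
rewrite mulr0 addr0.
transitivity (\prod_j (if ffbelast q j then 0 else e * v + f * w (wid j)) * ((1 - t) * c * v)).
  by congr (_ * _); apply: eq_bigr => j _; rewrite !ffunE; case: (q (wid j)).
by rewrite prod_Omega /Omega; case: eqP => _; ring.
Qed.

(* At [a u_N + b w_N = 0] the operator [B(u_N)], acting first on [Omega], must flip the last
   site to 1, and every later [B(u_i)] then keeps it at 1 with weight [a t u_i + b w_N]. *)
Lemma ZN_frozen (u w : 'I_n.+1 -> R) : a * u ord_max + b * w ord_max = 0 ->
  ZN u w =
    ((1 - t) * c * u ord_max * \prod_(j < n) (e * u ord_max + f * w (wid j)))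
    * \prod_(i < n) (a * t * u (wid i) + b * w ord_max)
    * ZN (fun i => u (wid i)) (fun j => w (wid j)).
Proof.
move=> /applyB_Omega_frozen BN_Omega.
rewrite !ZN_applyBs enum_ordSr /applyBs foldr_rcons foldr_map -/(applyBs _ _ _ _).
rewrite (applyBs_last1 _ _ _ (phi := fun q => _ * Omega R q) BN_Omega) ffunE.
have -> : ffbelast [ffun => true] = [ffun => true] :> config n by apply/ffunP => j; rewrite !ffunE.
by rewrite applyBsZ big_enum /= mulrA [_ * (_ * _ * _ * _)]mulrC.
Qed.

End LastColumn.

Section DeterminantSide.
Variable R : idomainType.
Variables t a b c e f : R.

Definition vdm n (x : 'I_n -> R) := \det (Vandermonde n (\row_j x j)).
Definition phi (x y : R) := (a * x + b * y) * (e * x + f * y).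
Definition Mphi n (u w : 'I_n -> R) : 'M[R]_n :=
  \matrix_(j, k) \prod_(l < n | l != k) phi (u j) (w l).
Definition cprod n (u : 'I_n -> R) := \prod_(j < n) ((1 - t) * c * u j).

Lemma vdmE n (x : 'I_n -> R) : vdm x = \prod_(i < n) \prod_(j < n | (i < j)%N) (x j - x i).
Proof.
by rewrite /vdm det_Vandermonde; apply: eq_bigr => i _; apply: eq_bigr => j _; rewrite !mxE.
Qed.

Lemma vdm_perm n (x : 'I_n -> R) (s : 'S_n) : vdm (fun i => x (s i)) = (-1) ^+ s * vdm x.
Proof.
rewrite /vdm.
have -> : Vandermonde n (\row_j x (s j)) = Vandermonde n (\row_j x j) *m perm_mx s^-1.
  by rewrite -col_permE; apply/matrixP => i j; rewrite !mxE.
by rewrite det_mulmx det_perm odd_permV mulrC.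
Qed.

Lemma vdm_eq0 n (x : 'I_n -> R) i j : i != j -> x i = x j -> vdm x = 0.
Proof.
move=> ne_ij eq_x; rewrite /vdm -det_tr; apply: (determinant_alternate ne_ij) => k.
by rewrite !mxE eq_x.
Qed.

Lemma det_Mphi_perm n (u w : 'I_n -> R) (s : 'S_n) :
  \det (Mphi (fun i => u (s i)) w) = (-1) ^+ s * \det (Mphi u w).
Proof.
have -> : Mphi (fun i => u (s i)) w = perm_mx s *m Mphi u w.
  by rewrite -row_permE; apply/matrixP => i j; rewrite !mxE.
by rewrite det_mulmx det_perm.
Qed.

Lemma cprod_perm n (u : 'I_n -> R) (s : 'S_n) : cprod (fun i => u (s i)) = cprod u.
Proof. by rewrite /cprod [RHS](reindex_inj (@perm_inj _ s)). Qed.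

Variable n : nat.
Local Notation wid := (widen_ord (leqnSn n)).

Lemma prod_pairs_recr (F : 'I_n.+1 -> 'I_n.+1 -> R) :
  \prod_(i < n.+1) \prod_(j < n.+1 | (i < j)%N) F i j =
  (\prod_(i < n) \prod_(j < n | (i < j)%N) F (wid i) (wid j)) * \prod_(i < n) F (wid i) ord_max.
Proof.
rewrite big_ord_recr /= [X in _ * X]big1 ?mulr1; last by move=> j; rewrite ltnNge -ltnS ltn_ord.
rewrite -big_split /=; apply: eq_bigr => i _.
by rewrite big_mkcond big_ord_recr /= ltn_ord -big_mkcond.
Qed.

Lemma vdm_recr (x : 'I_n.+1 -> R) :
  vdm x = vdm (fun i => x (wid i)) * \prod_(i < n) (x ord_max - x (wid i)).
Proof. by rewrite !vdmE prod_pairs_recr. Qed.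

Lemma vdm_polyfun_last (w : 'I_n.+1 -> R) : polyfun n.+1 (fun X => vdm (setlast w X)).
Proof.
apply: (@polyfun_leq _ (1 * n).+1); first by rewrite mul1n.
apply: eq_polyfun (polyfunMl _ (polyfun_prod _)) _.
- by move=> i; apply: (polyfun_lin 1 (- w (wid i))).
- move=> X; rewrite vdm_recr setlast_max; congr (vdm _ * _).
    by apply: functional_extensionality => i; rewrite setlast_widen.
  by apply: eq_bigr => i _; rewrite setlast_widen mul1r.
Qed.

Lemma prod_neq_recr (F : 'I_n.+1 -> R) (k : 'I_n.+1) :
  \prod_(l < n.+1 | l != k) F l =
  (\prod_(l < n | wid l != k) F (wid l)) * (if ord_max != k then F ord_max else 1).
Proof. by rewrite big_mkcond big_ord_recr /= -big_mkcond. Qed.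

Lemma prod_setlast_notmax (P : pred 'I_n.+1) (F : R -> R) w X :
  (forall l, P l -> l != ord_max) -> \prod_(l | P l) F (setlast w X l) = \prod_(l | P l) F (w l).
Proof. by move=> Pmax; apply: eq_bigr => l /Pmax /negbTE nl; rewrite /setlast nl. Qed.

Lemma phi_polyfun x : polyfun 3 (fun X => phi x X).
Proof.
apply: eq_polyfun (polyfunM (polyfun_lin b (a * x)) (polyfun_lin f (e * x))) _ => X.
by rewrite /phi; ring.
Qed.

(* Expanding along the last column, whose entries do not involve [w_N], leaves minors
   whose entries each contain exactly one factor [phi _ w_N]. *)
Lemma det_Mphi_polyfun_last (u w : 'I_n.+1 -> R) :
  polyfun (2 * n).+1 (fun X => \det (Mphi u (setlast w X))).
Proof.
apply: eq_polyfun (_ : polyfun _ (fun X => \sum_i Mphi u w i ord_max *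
                        cofactor (Mphi u (setlast w X)) i ord_max)) _; last first.
  move=> X; rewrite (expand_det_col _ ord_max); apply: eq_bigr => i _; rewrite !mxE.
  by rewrite prod_setlast_notmax.
apply: polyfun_sum => i _; apply: polyfunMl; apply: polyfunMl; apply: polyfun_det => j k.
apply: eq_polyfun (polyfunMr _ (phi_polyfun (u (lift i j)))) _ => X.
rewrite !mxE [in RHS](bigD1 ord_max) /=; last exact: neq_lift.
by rewrite setlast_max prod_setlast_notmax // => l /andP[].
Qed.

Lemma det_Mphi_eq0 (u w : 'I_n.+1 -> R) (j : 'I_n) : w ord_max = w (wid j) -> \det (Mphi u w) = 0.
Proof.
move=> eq_w; have wid_inj : injective wid by move=> l l' /(congr1 val) /= /val_inj.
have wid_max l : (wid l != ord_max) = true by rewrite widen_ord_lift_max eq_sym neq_lift.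
have max_wid : ord_max != wid j by rewrite eq_sym wid_max.
rewrite -det_tr; apply: (determinant_alternate max_wid) => r; rewrite !mxE !prod_neq_recr.
rewrite eqxx max_wid /= mulr1 eq_w (eq_bigl _ _ wid_max).
rewrite (eq_bigl _ _ (fun l => congr1 negb (inj_eq wid_inj l j))).
by rewrite (bigD1 j) //= mulrC.
Qed.

Lemma det_Mphi_frozen (u w : 'I_n.+1 -> R) : a * u ord_max + b * w ord_max = 0 ->
  \det (Mphi u w) =
  (\prod_(l < n) phi (u ord_max) (w (wid l))) * (\prod_(j < n) phi (u (wid j)) (w ord_max))
  * \det (Mphi (fun i => u (wid i)) (fun l => w (wid l))).
Proof.
move=> frozen; rewrite (expand_det_row _ ord_max) (bigD1 ord_max) //= big1 ?addr0; last first.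
  move=> k nk; rewrite mxE (bigD1 ord_max) /=; last by rewrite eq_sym.
  by rewrite /phi frozen !mul0r.
rewrite mxE /cofactor exprD -exprMn mulrNN mulr1 expr1n mul1r.
have -> : row' ord_max (col' ord_max (Mphi u w))
        = diag_mx (\row_j phi (u (wid j)) (w ord_max))
          *m Mphi (fun i => u (wid i)) (fun l => w (wid l)).
  rewrite mul_diag_mx; apply/matrixP => j k; rewrite !mxE prod_neq_recr.
  by rewrite neq_lift -!widen_ord_lift_max mulrC; congr (_ * _).
rewrite det_mulmx det_diag mulrA; congr (_ * _ * _).
  rewrite prod_neq_recr eqxx /= mulr1.
  by apply: eq_bigl => l; rewrite widen_ord_lift_max eq_sym neq_lift.
by apply: eq_bigr => j _; rewrite mxE.
Qed.

End DeterminantSide.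

Section IzerginKorepin.
Variable R : numClosedFieldType.
Variables t a b c d e f : R.
Hypothesis a_neq0 : a != 0.
Hypothesis b_neq0 : b != 0.
Hypothesis c_neq0 : c != 0.
Hypothesis cd_af : c * d + a * f = 0.
Hypothesis cd_be : t * c * d + b * e = 0.

Local Notation ZN := (ZN t a b c d e f).
Local Notation phi := (phi a b e f).
Local Notation Mphi := (Mphi a b e f).
Local Notation cprod := (cprod t c).

Definition IK_identity n (u w : 'I_n -> R) :=
  (- (c * d)) ^+ 'C(n, 2) * vdm u * vdm w * ZN u w = cprod u * \det (Mphi u w).

Lemma IK_identity0 (u w : 'I_0 -> R) : IK_identity u w.
Proof.
rewrite /IK_identity /vdm !det_mx00 /cprod big_ord0 bin0n expr0 !mul1r /ZN enum_ord0 /= /Omega.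
by case: eqP => // -[]; apply/ffunP => -[].
Qed.

Lemma IK_identity_perm n (u w : 'I_n -> R) (s : 'S_n) :
  IK_identity (fun i => u (s i)) w -> IK_identity u w.
Proof.
have sgK : (-1) ^+ s * (-1) ^+ s = 1 :> R by rewrite -expr2 sqrr_sign.
rewrite /IK_identity vdm_perm det_Mphi_perm (ZN_perm b_neq0 c_neq0 cd_af cd_be) cprod_perm.
move=> /(congr1 (fun x => (-1) ^+ s * x)).
by rewrite !mulrA ![_ * (-1) ^+ s]mulrC !mulrA sgK !mul1r.
Qed.

Lemma frozen_factor ul ui x wi : a * ul + b * x = 0 ->
  - (c * d) * ((ul - ui) * (x - wi) * (e * ul + f * wi) * (a * t * ui + b * x))
  = phi ul wi * phi ui x.
Proof.
move=> frozen; have -> : x = - (a * ul) / b.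
  apply: (mulfI b_neq0); rewrite mulrCA divff // mulr1.
  by apply/eqP; rewrite -addr_eq0 addrC frozen.
by rewrite /phi (dE c_neq0 cd_af) (eE b_neq0 cd_af cd_be); field; rewrite b_neq0 c_neq0.
Qed.

Section Step.
Variable n : nat.
Local Notation wid := (widen_ord (leqnSn n)).

Lemma IK_identity_frozen (u w : 'I_n.+1 -> R) : a * u ord_max + b * w ord_max = 0 ->
  IK_identity (fun i => u (wid i)) (fun j => w (wid j)) -> IK_identity u w.
Proof.
move=> frozen IH; rewrite /IK_identity (ZN_frozen _ _ _ _ _ frozen).
rewrite (det_Mphi_frozen _ _ frozen) vdm_recr [vdm w]vdm_recr /cprod big_ord_recr /=.
set Pu := \prod_(i < n) (u ord_max - u (wid i)).
set Pw := \prod_(i < n) (w ord_max - w (wid i)).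
set Pe := \prod_(j < n) (e * u ord_max + f * w (wid j)).
set Pa := \prod_(i < n) (a * t * u (wid i) + b * w ord_max).
have factors : (- (c * d)) ^+ n * (Pu * Pw * Pe * Pa)
    = \prod_(l < n) phi (u ord_max) (w (wid l)) * \prod_(j < n) phi (u (wid j)) (w ord_max).
  rewrite -[n in _ ^+ n]card_ord -prodr_const -!big_split /=.
  by apply: eq_bigr => j _; rewrite -frozen_factor //; ring.
rewrite binS bin1 exprD; move: IH factors; rewrite /IK_identity /cprod.
set K := _ ^+ 'C(n, 2); set Kn := _ ^+ n; set Z := ZN _ _; set D := \det _.
set Vu := vdm _; set Vw := vdm _.
move=> IH factors.
transitivity ((K * Vu * Vw * Z) * ((1 - t) * c * u ord_max) * (Kn * (Pu * Pw * Pe * Pa))).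
  by ring.
by rewrite IH factors; ring.
Qed.

Lemma IK_identity_coincide (u w : 'I_n.+1 -> R) (j : 'I_n) :
  w ord_max = w (wid j) -> IK_identity u w.
Proof.
move=> eq_w; rewrite /IK_identity (det_Mphi_eq0 _ _ _ _ _ eq_w) (vdm_eq0 _ eq_w) ?mulr0 ?mul0r //.
by rewrite widen_ord_lift_max neq_lift.
Qed.

Lemma IK_identity_frozen_perm (u w : 'I_n.+1 -> R) i : a * u i + b * w ord_max = 0 ->
  IK_identity (fun k => u (tperm i ord_max (wid k))) (fun j => w (wid j)) -> IK_identity u w.
Proof.
move=> frozen IH; apply: (IK_identity_perm (s := tperm i ord_max)).
by apply: IK_identity_frozen; rewrite ?tpermR.
Qed.

Lemma IK_defect_polyfun_last (u w : 'I_n.+1 -> R) :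
  polyfun (2 * n).+1 (fun X =>
    (- (c * d)) ^+ 'C(n.+1, 2) * vdm u * vdm (setlast w X) * ZN u (setlast w X)
    - cprod u * \det (Mphi u (setlast w X))).
Proof.
apply: polyfunD; last by apply/polyfunN/polyfunMl/det_Mphi_polyfun_last.
have := polyfunM (vdm_polyfun_last w) (ZN_polyfun_last t a b c d e f u w).
rewrite (_ : (n.+1 + n.+1).-1 = (2 * n).+1)%N; last by lia.
move=> /(polyfunMl ((- (c * d)) ^+ 'C(n.+1, 2) * vdm u)) polyP.
by apply: eq_polyfun polyP _ => X; rewrite !mulrA.
Qed.

End Step.

Theorem IK_identity_holds n (u w : 'I_n -> R) : injective u -> injective w ->
  (forall j k, a * u j + b * w k != 0) -> IK_identity u w.
Proof.
elim: n u w => [|n IH] u w inj_u inj_w ab_neq0; first exact: IK_identity0.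
set wid := widen_ord (leqnSn n).
have inj_wid (x : 'I_n.+1 -> R) : injective x -> injective (fun i => x (wid i)).
  by move=> inj_x l l' /inj_x /(congr1 val) /= /val_inj.
have G0 := polyfun_eq0 (IK_defect_polyfun_last u w)
  (s := [seq - (a * u i) / b | i <- enum 'I_n.+1] ++ [seq w (wid j) | j <- enum 'I_n]).
apply/eqP; rewrite -subr_eq0 -{1 2 3}(setlast_id w); apply/eqP; apply: G0 => //.
- rewrite cat_uniq; apply/and3P; split.
  + rewrite map_inj_uniq ?enum_uniq // => i j eq_ij; apply: inj_u; apply: (mulfI a_neq0).
    by apply: oppr_inj; apply: (mulIf (invr_neq0 b_neq0)).
  + apply/hasPn => y /mapP [j _ ->]; apply/mapP => -[i _ eq_wu].
    by move/eqP: (ab_neq0 i (wid j)); apply; rewrite eq_wu; field.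
  + by rewrite map_inj_uniq ?enum_uniq //; apply: inj_wid.
- by rewrite size_cat !size_map -!enumT !size_enum_ord; lia.
move=> x; rewrite mem_cat => /orP[] /mapP [i _ ->]; apply/eqP; rewrite subr_eq0; apply/eqP.
  apply: (IK_identity_frozen_perm (i := i)); first by rewrite setlast_max; field.
  have -> : (fun j => setlast w (- (a * u i) / b) (wid j)) = (fun j => w (wid j)).
    by apply: functional_extensionality => j; rewrite setlast_widen.
  have inj_us : injective (fun k => u (tperm i ord_max (wid k))).
    by apply: (inj_wid (fun k => u (tperm i ord_max k))) => k l /inj_u /perm_inj.
  exact: IH inj_us (inj_wid _ inj_w) (fun k l => ab_neq0 _ _).
have eq_w : setlast w (w (wid i)) ord_max = setlast w (w (wid i)) (wid i).
  by rewrite setlast_max setlast_widen.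
exact: IK_identity_coincide eq_w.
Qed.

End IzerginKorepin.

Section ClosedForm.
Variable R : fieldType.

Lemma prod_pairs_const n (k : R) : \prod_(i < n) \prod_(j < n | (i < j)%N) k = k ^+ 'C(n, 2).
Proof.
elim: n => [|n IH]; first by rewrite big_ord0.
by rewrite (prod_pairs_recr (fun _ _ => k)) IH prodr_const card_ord binS bin1 exprD.
Qed.

Lemma vdm_neq0 n (x : 'I_n -> R) : injective x -> vdm x != 0.
Proof.
move=> inj_x; rewrite vdmE prodf_seq_neq0; apply/allP => i _; apply/implyP => _.
rewrite prodf_seq_neq0; apply/allP => j _; apply/implyP => lt_ij.
by rewrite subr_eq0; apply: contraTneq lt_ij => /inj_x ->; rewrite ltnn.
Qed.

Lemma prod_pairs_vdm n (u w : 'I_n -> R) :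
  \prod_(j < n) \prod_(k < n | (j < k)%N) ((u j - u k) * (w k - w j))
  = (-1) ^+ 'C(n, 2) * vdm u * vdm w.
Proof.
rewrite !vdmE -prod_pairs_const -!big_split /=; apply: eq_bigr => i _.
by rewrite -!big_split /=; apply: eq_bigr => j _; ring.
Qed.

Lemma det_Mphi_inv (a b e f : R) n (u w : 'I_n -> R) :
  (forall j k, phi a b e f (u j) (w k) != 0) ->
  \det (Mphi a b e f u w) = (\prod_(j < n) \prod_(k < n) phi a b e f (u j) (w k))
                           * \det (\matrix_(j, k) (phi a b e f (u j) (w k))^-1).
Proof.
move=> phi_neq0.
have -> : Mphi a b e f u w = diag_mx (\row_j \prod_(k < n) phi a b e f (u j) (w k))
                             *m \matrix_(j, k) (phi a b e f (u j) (w k))^-1.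
  rewrite mul_diag_mx; apply/matrixP => j k; rewrite !mxE [in RHS](bigD1 k) //=.
  by rewrite mulrAC divff ?mul1r.
by rewrite det_mulmx det_diag; congr (_ * _); apply: eq_bigr => j _; rewrite mxE.
Qed.

End ClosedForm.

Theorem mainTheorem7 (R : numClosedFieldType) (t a b c d e f : R)
  (ht0 : t != 0) (ha : a != 0) (hb : b != 0) (hc : c != 0) (hd : d != 0)
  (he : e != 0) (hf : f != 0) (ht1 : t != 1)
  (h1 : c * d + a * f = 0) (h2 : t * c * d + b * e = 0)
  (N : nat) (hN : (1 <= N)%N) (u w : 'I_N -> R)
  (hu : injective u) (hw : injective w)
  (hab : forall j k, a * u j + b * w k != 0)
  (hef : forall j k, e * u j + f * w k != 0) :
  ZN t a b c d e f u w =
    (\prod_(j < N) ((1 - t) * c * u j)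
       * \prod_(j < N) \prod_(k < N) ((a * u j + b * w k) * (e * u j + f * w k)))
    / ((c * d) ^+ ((N * N.-1)./2)
       * \prod_(j < N) \prod_(k < N | (j < k)%N) ((u j - u k) * (w k - w j)))
    * \det (\matrix_(j < N, k < N)
              ((a * u j + b * w k) * (e * u j + f * w k))^-1).
Proof.
have IK := IK_identity_holds ha hb hc h1 h2 hu hw hab.
have phi_neq0 j k : phi a b e f (u j) (w k) != 0 by rewrite mulf_neq0.
have cd_neq0 : c * d != 0 by rewrite mulf_neq0.
have sgn_neq0 : (-1) ^+ 'C(N, 2) != 0 :> R by rewrite signr_eq0.
have sgn_cd : (- (c * d)) ^+ 'C(N, 2) = (-1) ^+ 'C(N, 2) * (c * d) ^+ 'C(N, 2).
  by rewrite -exprMn mulN1r.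
move: IK; rewrite /IK_identity (det_Mphi_inv phi_neq0) sgn_cd -bin2 prod_pairs_vdm => IK.
apply: (mulfI sgn_neq0); apply: (mulfI (expf_neq0 _ cd_neq0)).
apply: (mulfI (vdm_neq0 hu)); apply: (mulfI (vdm_neq0 hw)).
rewrite [LHS](_ : _ = (-1) ^+ 'C(N, 2) * (c * d) ^+ 'C(N, 2) * vdm u * vdm w
                     * ZN t a b c d e f u w); last by ring.
rewrite IK /cprod /phi; field.
by rewrite sgn_neq0 expf_neq0 // (vdm_neq0 hu) (vdm_neq0 hw).
Qed.
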